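(* Let $H\in\mathbb{R}^{n\times d}$ have rank $h$, $\Sigma\in\mathbb{R}^{n\times n}$ symmetric positive definite, and let $\Gamma_i$ be the empirical covariances of deterministic EKI iterates $v_{i+1}^{(j)}=v_i^{(j)}+\Gamma_iH^\top(H\Gamma_iH^\top+\Sigma)^{-1}(y-Hv_i^{(j)})$. Fix $i\ge0$, and let $w_1,\dots,w_n$ and $r$ be as in the context, with $H\Gamma_iH^\top w_\ell=\delta_{\ell,i}\Sigma w_\ell$. For $\ell=1,\dots,r$ let $u_\ell=\frac1{\delta_{\ell,i}}\Gamma_iH^\top w_\ell$, and if $h>r$, for $\ell=r+1,\dots,h$ let $u_\ell=H^+\Sigma w_\ell$. Then for all $\ell\le h$, $u_\ell$ is an eigenvector of $\Gamma_iH^\top\Sigma^{-1}H$ with eigenvalue $\delta_{\ell,i}$, i.e. $\Gamma_iH^\top\Sigma^{-1}Hu_\ell=\delta_{\ell,i}u_\ell$, and conversely $w_\ell=\Sigma^{-1}Hu_\ell$ for all $\ell\le h$.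
   Context: $H^+=(H^\top\Sigma^{-1}H)^\dagger H^\top\Sigma^{-1}$ with $\dagger$ the Moore–Penrose pseudoinverse. Empirical covariance $\Gamma_i=\frac1{J-1}\sum_j(v_i^{(j)}-\bar v_i)(v_i^{(j)}-\bar v_i)^\top$. $r$ is the number of positive eigenvalues of the pencil $(H\Gamma_iH^\top,\Sigma)$, and $w_1,\dots,w_n$ is a $\Sigma$-orthogonal basis of $\mathbb{R}^n$ of generalized eigenvectors of this pencil with: $w_1,\dots,w_r\in\mathsf{Ran}(\Sigma^{-1}H)$ having positive eigenvalues; $w_{r+1},\dots,w_h\in\mathsf{Ran}(\Sigma^{-1}H)$ having eigenvalue zero; $w_{h+1},\dots,w_n$ a basis of $\mathsf{Ker}(H^\top)$. *)

From HB Require Import structures.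
From mathcomp Require Import all_boot all_order all_algebra.
Set Implicit Arguments. Unset Strict Implicit. Unset Printing Implicit Defensive.
Import Order.TTheory GRing.Theory Num.Theory.
Local Open Scope ring_scope.

Section EKI.
Variables (R : realFieldType) (n d J : nat).

Definition ens_mean (v : 'I_J -> 'cV[R]_d) : 'cV[R]_d :=
  (J%:R)^-1 *: \sum_(j < J) v j.

Definition ens_cov (v : 'I_J -> 'cV[R]_d) : 'M[R]_d :=
  ((J.-1)%:R)^-1 *: \sum_(j < J) ((v j - ens_mean v) *m (v j - ens_mean v)^T).

Definition eki_step (H : 'M[R]_(n, d)) (Sigma : 'M[R]_n) (y : 'cV[R]_n)
    (v : 'I_J -> 'cV[R]_d) : 'I_J -> 'cV[R]_d :=
  fun j => v j + ens_cov v *m H^T *m invmx (H *m ens_cov v *m H^T + Sigma)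
                 *m (y - H *m v j).

Definition eki_iter (H : 'M[R]_(n, d)) (Sigma : 'M[R]_n) (y : 'cV[R]_n)
    (v0 : 'I_J -> 'cV[R]_d) (i : nat) : 'I_J -> 'cV[R]_d :=
  iter i (eki_step H Sigma y) v0.

End EKI.

Definition spd (R : realFieldType) (m : nat) (S : 'M[R]_m) : Prop :=
  S^T = S /\ forall x : 'cV[R]_m, x != 0 -> 0 < (x^T *m S *m x) 0 0.

Definition is_MP_pinv (R : realFieldType) (m k : nat)
    (A : 'M[R]_(m, k)) (X : 'M[R]_(k, m)) : Prop :=
  [/\ A *m X *m A = A, X *m A *m X = X,
      (A *m X)^T = A *m X & (X *m A)^T = X *m A].

From HB Require Import structures.
From mathcomp Require Import all_boot all_order all_algebra.
Set Implicit Arguments. Unset Strict Implicit. Unset Printing Implicit Defensive.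
Import Order.TTheory GRing.Theory Num.Theory.
Local Open Scope ring_scope.

(* For l < r, w_l is an eigenvector of (Sigma^-1 H)(Gamma H^T) with nonzero
   eigenvalue, so swapping the two factors turns Gamma H^T w_l into an
   eigenvector of Gamma H^T Sigma^-1 H. For r <= l < h the eigenvalue is 0:
   since Gamma is positive semidefinite, w^T H Gamma H^T w = 0 forces
   Gamma H^T w = 0, and w = Sigma^-1 H z is recovered from u = H^+ Sigma w
   because H P A = H for the normal matrix A = H^T Sigma^-1 H and any
   generalized inverse P of A. *)

Section PositiveDefinite.
Variables (R : realFieldType) (m : nat) (S : 'M[R]_m).
Hypothesis SP : spd S.

Lemma spd_unitmx : S \in unitmx.
Proof.
case: SP => _ Spos; rewrite unitmxE unitfE; apply/negP => /det0P [v v_neq0 vS].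
have := Spos v^T; rewrite trmx_eq0 => /(_ v_neq0).
by rewrite trmxK vS mul0mx mxE ltxx.
Qed.

Lemma spd_form_eq0 (x : 'cV[R]_m) : x^T *m S *m x = 0 -> x = 0.
Proof.
case: SP => _ Spos x0; apply/eqP; apply: contraTT isT => /Spos.
by rewrite x0 mxE ltxx.
Qed.

Lemma spd_invmx : spd (invmx S).
Proof.
have Su := spd_unitmx; case: SP => ST Spos.
split=> [|x x_neq0]; first by rewrite trmx_inv ST.
have xE : x = S *m (invmx S *m x) by rewrite mulKVmx.
have y_neq0 : invmx S *m x != 0.
  by apply: contra_neq x_neq0 => y0; rewrite xE y0 mulmx0.
by rewrite -mulmxA {1}xE trmx_mul ST; exact: Spos.
Qed.

End PositiveDefinite.

Section Covariance.
Variables (R : realFieldType) (d J : nat).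

Lemma sum_outer_form_eq0 (a : 'I_J -> 'cV[R]_d) (x : 'cV[R]_d) :
  x^T *m (\sum_j a j *m (a j)^T) *m x = 0 -> forall j, (a j)^T *m x = 0.
Proof.
pose s j := ((a j)^T *m x) 0 0.
have termE j : (x^T *m (a j *m (a j)^T) *m x) 0 0 = s j ^+ 2.
  have -> : x^T *m (a j *m (a j)^T) *m x = ((a j)^T *m x)^T *m ((a j)^T *m x).
    by rewrite trmx_mul trmxK !mulmxA.
  rewrite [(a j)^T *m x]mx11_scalar tr_scalar_mx mul_scalar_mx -/(s j).
  by rewrite mxE mxE eqxx mulr1n expr2.
rewrite mulmx_sumr mulmx_suml => /matrixP /(_ 0 0).
rewrite summxE mxE (eq_bigr (fun j => s j ^+ 2)) => [sum_s0 j|j _]; last exact: termE.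
have /eqP := psumr_eq0P (fun j _ => sqr_ge0 (s j)) sum_s0 (i := j) isT.
by rewrite sqrf_eq0 => /eqP s0; rewrite [_ *m x]mx11_scalar -/(s j) s0 raddf0.
Qed.

Lemma ens_cov_form_eq0 (v : 'I_J -> 'cV[R]_d) (x : 'cV[R]_d) :
  x^T *m ens_cov v *m x = 0 -> ens_cov v *m x = 0.
Proof.
rewrite /ens_cov -scalemxAr -!scalemxAl.
have [->|c_neq0] := eqVneq ((J.-1)%:R^-1 : R) 0; first by rewrite !scale0r.
move=> /eqP; rewrite scaler_eq0 (negbTE c_neq0) /= => /eqP /sum_outer_form_eq0 a0.
by rewrite mulmx_suml big1 ?scaler0 // => j _; rewrite -mulmxA a0 mulmx0.
Qed.

End Covariance.

Lemma mulmx_eigen_swap (R : fieldType) (m p : nat) (K : 'M[R]_(m, p))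
    (G : 'M[R]_(p, m)) (w : 'cV[R]_m) (a : R) :
  K *m G *m w = a *: w -> a != 0 ->
  let u := a^-1 *: (G *m w) in G *m K *m u = a *: u /\ K *m u = w.
Proof.
move=> KGw a_neq0 u.
have Ku : K *m u = w by rewrite -scalemxAr mulmxA KGw scalerA mulVf ?scale1r.
by split=> //; rewrite -mulmxA Ku scalerA mulfV ?scale1r.
Qed.

Section PencilEigenvectors.
Variables (R : realFieldType) (n d : nat).
Variables (H : 'M[R]_(n, d)) (Sigma : 'M[R]_n) (Gamma : 'M[R]_d).
Hypothesis SigmaP : spd Sigma.

Local Notation A := (H^T *m invmx Sigma *m H).

Lemma mulmx_normal_ginv (P : 'M[R]_d) (z : 'cV[R]_d) :
  A *m P *m A = A -> H *m (P *m A *m z) = H *m z.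
Proof.
move=> APA; apply/eqP; rewrite -subr_eq0 -mulmxBr; apply/eqP.
set e := _ - z; apply: (spd_form_eq0 (spd_invmx SigmaP)).
have Ae : A *m e = 0 by rewrite mulmxBr (mulmxA A) (mulmxA A P) APA subrr.
have -> : (H *m e)^T *m invmx Sigma *m (H *m e) = e^T *m (A *m e).
  by rewrite trmx_mul !mulmxA.
by rewrite Ae mulmx0.
Qed.

Lemma pencil_eigvec_pos (w : 'cV[R]_n) (delta : R) :
  H *m Gamma *m H^T *m w = delta *: (Sigma *m w) -> delta != 0 ->
  let u := delta^-1 *: (Gamma *m H^T *m w) in
  Gamma *m H^T *m invmx Sigma *m H *m u = delta *: u /\
  w = invmx Sigma *m H *m u.
Proof.
move=> eigw delta_neq0.
have KGw : invmx Sigma *m H *m (Gamma *m H^T) *m w = delta *: w.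
  have -> : invmx Sigma *m H *m (Gamma *m H^T) *m w
          = invmx Sigma *m (H *m Gamma *m H^T *m w) by rewrite !mulmxA.
  by rewrite eigw -scalemxAr mulKmx ?spd_unitmx.
have [GKu Ku] := mulmx_eigen_swap KGw delta_neq0.
by split; [rewrite -GKu !mulmxA | rewrite Ku].
Qed.

Hypothesis GammaP : forall x : 'cV[R]_d, x^T *m Gamma *m x = 0 -> Gamma *m x = 0.

Lemma pencil_eigvec_zero (P : 'M[R]_d) (w : 'cV[R]_n) (z : 'cV[R]_d) :
  A *m P *m A = A ->
  H *m Gamma *m H^T *m w = 0 -> w = invmx Sigma *m H *m z ->
  let u := P *m H^T *m invmx Sigma *m Sigma *m w in
  Gamma *m H^T *m invmx Sigma *m H *m u = 0 /\ w = invmx Sigma *m H *m u.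
Proof.
move=> APA eigw wE u.
have uE : u = P *m A *m z.
  by rewrite /u -(mulmxA _ (invmx Sigma)) mulVmx ?spd_unitmx // mulmx1 wE !mulmxA.
have Ku : invmx Sigma *m H *m u = w.
  by rewrite uE -mulmxA mulmx_normal_ginv // mulmxA -wE.
have GHw : Gamma *m (H^T *m w) = 0.
  apply: GammaP; have -> : (H^T *m w)^T *m Gamma *m (H^T *m w)
                          = w^T *m (H *m Gamma *m H^T *m w).
    by rewrite trmx_mul trmxK !mulmxA.
  by rewrite eigw mulmx0.
split; last by rewrite Ku.
have -> : Gamma *m H^T *m invmx Sigma *m H *m u
        = Gamma *m (H^T *m (invmx Sigma *m H *m u)) by rewrite !mulmxA.
by rewrite Ku GHw.
Qed.

End PencilEigenvectors.

Theorem proposition3p13 (R : realFieldType) (n d J h r : nat)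
  (H : 'M[R]_(n, d)) (Sigma : 'M[R]_n) (y : 'cV[R]_n)
  (v0 : 'I_J -> 'cV[R]_d) (i : nat)
  (P : 'M[R]_d) (* the Moore--Penrose pseudoinverse of H^T Sigma^{-1} H *)
  (w : 'I_n -> 'cV[R]_n) (delta : 'I_n -> R) :
  \rank H = h ->
  spd Sigma ->
  is_MP_pinv (H^T *m invmx Sigma *m H) P ->
  let Gamma := ens_cov (eki_iter H Sigma y v0 i) in
  let Hplus := P *m H^T *m invmx Sigma in
  (* generalized eigenvectors of the pencil (H Gamma H^T, Sigma) *)
  (forall l, H *m Gamma *m H^T *m w l = delta l *: (Sigma *m w l)) ->
  (* Sigma-orthogonal basis of R^n *)
  (forall k l, k != l -> (w k)^T *m Sigma *m w l = 0) ->
  (forall c : 'I_n -> R, \sum_(l < n) c l *: w l = 0 -> forall l, c l = 0) ->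
  (r <= h)%N ->
  (forall l : 'I_n, (l < r)%N ->
     0 < delta l /\ exists z : 'cV[R]_d, w l = invmx Sigma *m H *m z) ->
  (forall l : 'I_n, (r <= l < h)%N ->
     delta l = 0 /\ exists z : 'cV[R]_d, w l = invmx Sigma *m H *m z) ->
  (forall l : 'I_n, (h <= l)%N -> H^T *m w l = 0) ->
  (forall x : 'cV[R]_n, H^T *m x = 0 ->
     exists c : 'I_n -> R, x = \sum_(l < n | (h <= l)%N) c l *: w l) ->
  let u := fun l : 'I_n =>
    if (l < r)%N then (delta l)^-1 *: (Gamma *m H^T *m w l)
    else Hplus *m Sigma *m w l in
  forall l : 'I_n, (l < h)%N ->
    Gamma *m H^T *m invmx Sigma *m H *m u l = delta l *: u l /\
    w l = invmx Sigma *m H *m u l.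
Proof.
move=> _ SigmaP [APA _ _ _] Gamma Hplus eigw _ _ _ posP zeroP _ _ u l lh.
rewrite /u /Hplus; case: ifP => lr.
  have [delta_pos _] := posP l lr.
  exact: (pencil_eigvec_pos SigmaP (eigw l) (lt0r_neq0 delta_pos)).
have [|delta0 [z wE]] := zeroP l; first by rewrite leqNgt lr lh.
rewrite delta0 scale0r.
apply: (pencil_eigvec_zero SigmaP _ APA _ wE) => [x|].
  exact: ens_cov_form_eq0.
by rewrite eigw delta0 scale0r.
Qed.
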